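(* There is an absolute constant $C>0$ such that for every field $\mathbb{F}$, every integer $n\ge 2$ and every nonzero alternating matrix space $\mathcal{A}\le\Lambda(n,\mathbb{F})$, we have $\chi(\mathcal{A})\le C\cdot\Delta(\mathcal{A})\cdot\log_2 n$.
   Context: $\Lambda(n,\mathbb{F})$ is the space of $n\times n$ alternating matrices over $\mathbb{F}$. A subspace $U\le\mathbb{F}^n$ is an isotropic space of $\mathcal{A}$ if $u^tAu'=0$ for all $u,u'\in U$, $A\in\mathcal{A}$. An isotropic $c$-decomposition is a direct sum decomposition $\mathbb{F}^n=U_1\oplus\cdots\oplus U_c$ into $c$ nonzero isotropic spaces; $\chi(\mathcal{A})$ is the least such $c$. For $v\in\mathbb{F}^n$, $\deg_{\mathcal{A}}(v)=\dim\langle Av : A\in\mathcal{A}\rangle$, and $\Delta(\mathcal{A})=\max\{\deg_{\mathcal{A}}(v): v\in\mathbb{F}^n\}$. *)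

From Stdlib Require Import Reals.
From HB Require Import structures.
From mathcomp Require Import all_boot all_order all_algebra.

Set Implicit Arguments.
Unset Strict Implicit.
Unset Printing Implicit Defensive.

Import GRing.Theory.
Local Open Scope ring_scope.

Section AltSpaces.
Variables (F : fieldType) (n : nat).

Definition alternating (M : 'M[F]_n) : Prop :=
  M^T = - M /\ forall i, M i i = 0.

Definition alt_space (A : {vspace 'M[F]_n}) : Prop :=
  forall M, M \in A -> alternating M.

Definition isotropic (A : {vspace 'M[F]_n}) (U : {vspace 'cV[F]_n}) : Prop :=
  forall M u u', M \in A -> u \in U -> u' \in U -> (u^T *m M *m u') 0 0 = 0.

Definition iso_decomp (A : {vspace 'M[F]_n}) (c : nat) : Prop :=
  exists U : 'I_c -> {vspace 'cV[F]_n},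
    [/\ (forall i, U i != 0%VS), (forall i, isotropic A (U i)),
        directv (\sum_(i < c) U i)%VS & (\sum_(i < c) U i)%VS = fullv].

Definition is_chi (A : {vspace 'M[F]_n}) (k : nat) : Prop :=
  iso_decomp A k /\ forall c, iso_decomp A c -> (k <= c)%N.

Definition deg_of (A : {vspace 'M[F]_n}) (v : 'cV[F]_n) : nat :=
  \dim (linfun (mulmxr v) @: A)%VS.

Definition is_Delta (A : {vspace 'M[F]_n}) (d : nat) : Prop :=
  (exists v, deg_of A v = d) /\ forall v, (deg_of A v <= d)%N.

End AltSpaces.

Definition log2R (n : nat) : R := Rdiv (ln (INR n)) (ln (INR 2)).

(* For a space A of alternating n x n matrices with Delta(A) = d, every
   isotropic U <= W extends to one that is maximal in W, i.e. every vector of W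
   that is A-orthogonal to U already lies in U. The A-orthogonal of U is the
   annihilator of A U = <M u : M in A, u in U>, a space of dimension at most
   d dim U, so a maximal isotropic U in W has dim W <= (d + 1) dim U.
   Peeling off such a U and recursing on a complement of U in W produces an
   isotropic decomposition of F^n with at most 1 + (d + 1) ln n parts, because
   each step shrinks the dimension by a factor 1 - 1/(d + 1); this is at most
   3 d log_2 n. *)

From Stdlib Require Import Reals Lra.
From HB Require Import structures.
From mathcomp Require Import all_boot all_order all_algebra zify.

Set Implicit Arguments.
Unset Strict Implicit.
Unset Printing Implicit Defensive.

Import GRing.Theory.

Section PeelingCount.
Local Open Scope R_scope.

Lemma ln_le_sub1 (y : R) : 0 < y -> ln y <= y - 1.
Proof. by move=> hy; have := exp_ineq1_le (ln y); rewrite exp_ln //; lra. Qed.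

(* One peeling step: if a dimension a + u drops to a by removing u, and
   a + u <= D u, the logarithmic budget 1 + D ln m decreases by at least 1. *)
Lemma peel_step_real (a u D : R) : 1 <= a -> 0 <= u -> 0 <= D -> a + u <= D * u ->
  1 + D * ln a <= D * ln (a + u).
Proof.
move=> ha hu hD hau.
have hb : 0 < a + u by lra.
have hratio : ln a - ln (a + u) <= a / (a + u) - 1.
  rewrite {1}/Rminus -ln_Rinv // -ln_mult; last by apply: Rinv_0_lt_compat.
    by apply: ln_le_sub1; apply: Rmult_lt_0_compat; [lra | apply: Rinv_0_lt_compat].
  lra.
have hfrac : a / (a + u) - 1 = - (u / (a + u)) by field; lra.
have hDu : 1 <= D * (u / (a + u)).
  apply: (Rmult_le_reg_r (a + u)) => //.
  have -> : D * (u / (a + u)) * (a + u) = D * u by field; lra.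
  lra.
have := Rmult_le_compat_l D _ _ hD hratio; rewrite hfrac; nra.
Qed.

Definition peel_bound (D m : nat) : R := 1 + INR D * ln (INR m).

Lemma peel_bound_ge1 (D m : nat) : (1 <= m)%N -> 1 <= peel_bound D m.
Proof.
move=> /leP /le_INR hm; rewrite /peel_bound.
have hln : 0 <= ln (INR m).
  case: (Req_dec (INR m) 1) => [-> | ne]; first by rewrite ln_1; lra.
  by rewrite -ln_1; left; apply: ln_increasing; simpl in hm |- *; lra.
have := Rmult_le_pos _ _ (pos_INR D) hln; lra.
Qed.

Lemma peel_bound_step (D a u : nat) : (1 <= a)%N -> (a + u <= D * u)%N ->
  peel_bound D a + 1 <= peel_bound D (u + a).
Proof.
move=> /leP /le_INR ha /leP /le_INR hau; rewrite /peel_bound plus_INR.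
rewrite plus_INR mult_INR in hau.
have := peel_step_real ha (pos_INR u) (pos_INR D) hau.
by rewrite (Rplus_comm (INR u)); lra.
Qed.

(* With D = d + 1 <= 2d and ln n <= log_2 n <= d log_2 n, the budget is at
   most 3 d log_2 n. *)
Lemma peel_bound_log2 (d n : nat) : (1 <= d)%N -> (2 <= n)%N ->
  peel_bound d.+1 n <= 3 * INR d * log2R n.
Proof.
move=> /leP /le_INR hd /leP /le_INR hn; rewrite /peel_bound /log2R S_INR.
simpl in hd, hn.
have hl2 : 0 < ln 2 by have := ln_lt_2; lra.
have hl2' : ln 2 < 1.
  by rewrite -(ln_exp 1); apply: ln_increasing; [lra | have := exp_ineq1 1; lra].
have hln : ln 2 <= ln (INR n).
  case: (Req_dec (INR n) 2) => [-> | ne]; first lra.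
  by left; apply: ln_increasing; lra.
have -> : INR 2 = 2 by simpl; lra.
set L := ln (INR n) / ln 2.
have hlnL2 : L * ln 2 = ln (INR n) by rewrite /L; field; lra.
have hL1 : 1 <= L by apply: (Rmult_le_reg_r (ln 2)) => //; lra.
have hlnL : ln (INR n) <= L by nra.
nra.
Qed.

End PeelingCount.

Local Open Scope ring_scope.

Section AlternatingForm.
Variables (F : fieldType) (n : nat).

Definition bform (M : 'M[F]_n) (u v : 'cV[F]_n) : F := (u^T *m M *m v) 0 0.

Lemma bformDl M u u' v : bform M (u + u') v = bform M u v + bform M u' v.
Proof. by rewrite /bform linearD /= !mulmxDl mxE. Qed.

Lemma bformDr M u v v' : bform M u (v + v') = bform M u v + bform M u v'.
Proof. by rewrite /bform mulmxDr mxE. Qed.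

Lemma bformZl M k u v : bform M (k *: u) v = k * bform M u v.
Proof. by rewrite /bform linearZ /= -!scalemxAl mxE. Qed.

Lemma bformZr M k u v : bform M u (k *: v) = k * bform M u v.
Proof. by rewrite /bform -scalemxAr mxE. Qed.

(* A 1 x 1 matrix equals its transpose. *)
Lemma bform_tr M u v : bform M u v = bform M^T v u.
Proof.
have -> : bform M u v = ((u^T *m M *m v)^T) 0 0 by rewrite [in RHS]mxE.
by rewrite !trmx_mul trmxK mulmxA.
Qed.

(* Alternating forms vanish on the diagonal: writing M = N - N^T with N
   strictly upper triangular, x^T M x = x^T N x - (x^T N x)^T = 0. *)
Lemma alternating_bform_self M x : alternating M -> bform M x x = 0.
Proof.
move=> [hT hdiag].
pose N := \matrix_(i, j) (if (i < j)%N then M i j else 0).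
have eM : M = N - N^T.
  apply/matrixP => i j; rewrite !mxE.
  case: (ltngtP i j) => hij; first by rewrite subr0.
    by rewrite sub0r; have := congr1 (fun X : 'M[F]_n => X j i) hT; rewrite !mxE.
  by move/val_inj: hij => ->; rewrite hdiag subr0.
have hNT : x^T *m N^T *m x = (x^T *m N *m x)^T by rewrite !trmx_mul trmxK mulmxA.
rewrite /bform eM mulmxBr mulmxBl hNT.
by move: (x^T *m N *m x) => B; rewrite !mxE subrr.
Qed.

Lemma alternating_bform_skew M u v : alternating M -> bform M u v = - bform M v u.
Proof. by move=> [hT _]; rewrite bform_tr hT /bform mulmxN mulNmx mxE. Qed.

End AlternatingForm.

Section Annihilator.
Variables (F : fieldType) (n : nat).

Definition basis_rows (V : {vspace 'cV[F]_n}) : 'M[F]_(\dim V, n) :=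
  \matrix_(i, j) ((vbasis V)`_i) j 0.

Definition annihilator (V : {vspace 'cV[F]_n}) : {vspace 'cV[F]_n} :=
  lker (linfun (mulmx (basis_rows V))).

Lemma annihilatorP V x y : x \in annihilator V -> y \in V -> (x^T *m y) 0 0 = 0.
Proof.
rewrite memv_ker lfunE /= => /eqP hx hy.
rewrite (coord_vbasis hy) mulmx_sumr summxE; apply: big1 => i _.
rewrite -scalemxAr mxE.
have -> : (x^T *m (vbasis V)`_i) 0 0 = (basis_rows V *m x) i 0.
  by rewrite !mxE; apply: eq_bigr => j _; rewrite !mxE mulrC.
by rewrite hx mxE mulr0.
Qed.

(* The annihilator is cut out by \dim V linear equations. *)
Lemma dim_cap_annihilator V W : (\dim W <= \dim (W :&: annihilator V) + \dim V)%N.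
Proof.
rewrite -[leqLHS](limg_ker_dim (linfun (mulmx (basis_rows V))) W) leq_add2l.
by apply: leq_trans (dimvS (subvf _)) _; rewrite dimvf dim_matrix mulr1.
Qed.

End Annihilator.

Section ImageSpaces.
Variables (F : fieldType) (n : nat) (A : {vspace 'M[F]_n}).

Definition Aimage (v : 'cV[F]_n) : {vspace 'cV[F]_n} := (linfun (mulmxr v) @: A)%VS.

Lemma mem_Aimage M v : M \in A -> M *m v \in Aimage v.
Proof. by move=> hM; have := memv_img (linfun (mulmxr v)) hM; rewrite lfunE. Qed.

Definition Aspan (U : {vspace 'cV[F]_n}) : {vspace 'cV[F]_n} :=
  (\sum_(i < \dim U) Aimage (vbasis U)`_i)%VS.

Lemma mem_Aspan (U : {vspace 'cV[F]_n}) M y : M \in A -> y \in U -> M *m y \in Aspan U.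
Proof.
move=> hM hy; rewrite (coord_vbasis hy) mulmx_sumr.
apply: rpred_sum => i _; rewrite -scalemxAr; apply: rpredZ.
by apply: (subvP (sumv_sup i _ (subvv _))) => //; exact: mem_Aimage.
Qed.

Lemma dim_Aspan d (U : {vspace 'cV[F]_n}) : (forall v, (deg_of A v <= d)%N) -> (\dim (Aspan U) <= \dim U * d)%N.
Proof.
move=> hd; apply: leq_trans (dimv_leq_sum _ _ _) _.
by rewrite -[X in (_ <= X * d)%N]card_ord -sum_nat_const; apply: leq_sum => i _; exact: hd.
Qed.

Definition Aperp (U : {vspace 'cV[F]_n}) : {vspace 'cV[F]_n} := annihilator (Aspan U).

Lemma AperpP (U : {vspace 'cV[F]_n}) x y M : x \in Aperp U -> y \in U -> M \in A -> bform M x y = 0.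
Proof. by move=> hx hy hM; rewrite /bform -mulmxA (annihilatorP hx (mem_Aspan hM hy)). Qed.

End ImageSpaces.

Section IsotropicExtension.
Variables (F : fieldType) (n : nat) (A : {vspace 'M[F]_n}).
Hypothesis altA : alt_space A.

Lemma isotropic0 : isotropic A 0%VS.
Proof. by move=> M u u' _; rewrite memv0 => /eqP -> _; rewrite trmx0 !mul0mx mxE. Qed.

(* An isotropic space stays isotropic when a vector of its A-orthogonal is
   adjoined: cross terms vanish by orthogonality and skew-symmetry, the new
   diagonal term because the forms are alternating. *)
Lemma isotropic_extend (U : {vspace 'cV[F]_n}) x :
  isotropic A U -> x \in Aperp A U -> isotropic A (U + <[x]>)%VS.
Proof.
move=> hU hx M u u' hM /memv_addP [a ha [b /vlineP [k ->] ->]]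
  /memv_addP [a' ha' [b' /vlineP [k' ->] ->]].
rewrite -/(bform M _ _) bformDl !bformDr !bformZl !bformZr.
rewrite [bform M a a'](hU M a a' hM ha ha') (AperpP hx ha' hM).
rewrite (alternating_bform_skew _ _ (altA hM)) (AperpP hx ha hM).
by rewrite (alternating_bform_self _ (altA hM)) !(mulr0, oppr0, addr0).
Qed.

Lemma maximal_isotropic (W U : {vspace 'cV[F]_n}) : (U <= W)%VS -> isotropic A U ->
  exists U', [/\ (U' <= W)%VS, isotropic A U' & (W :&: Aperp A U' <= U')%VS].
Proof.
have [m lem] := ubnP (n - \dim U); elim: m U lem => // m IH U hm hUW hU.
have [hmax | /subvPn [x]] := boolP (W :&: Aperp A U <= U)%VS; first by exists U.
rewrite memv_cap => /andP [hxW hxp] hxU.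
have hgrow : (\dim U < \dim (U + <[x]>))%N.
  by rewrite (ltn_leqif (dimv_leqif_sup (addvSl U _))) subv_add subvv -memvE.
have hle : (\dim (U + <[x]>) <= n)%N.
  by apply: leq_trans (dimvS (subvf _)) _; rewrite dimvf dim_matrix mulr1.
apply: (IH (U + <[x]>)%VS); first by lia.
  by rewrite subv_add hUW -memvE.
exact: isotropic_extend.
Qed.

End IsotropicExtension.

Section Peeling.
Variables (F : fieldType) (n : nat) (A : {vspace 'M[F]_n}).

Definition iso_parts (W : {vspace 'cV[F]_n}) (s : seq {vspace 'cV[F]_n}) : Prop :=
  [/\ forall U, U \in s -> U != 0%VS, forall U, U \in s -> isotropic A U,
      (\sum_(U <- s) U)%VS = W & \dim W = (\sum_(U <- s) \dim U)%N].

Lemma iso_parts_dim0 W s : iso_parts W s -> \dim W = 0%N -> s = [::].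
Proof.
case: s => // U s [hnz _ _ hdim]; rewrite hdim big_cons => /eqP.
by rewrite addn_eq0 dimv_eq0 (negPf (hnz U (mem_head _ _))).
Qed.

Lemma iso_parts_cons W U s : U != 0%VS -> isotropic A U -> (U <= W)%VS ->
  iso_parts (W :\: U)%VS s -> iso_parts W (U :: s).
Proof.
move=> hU0 hU hUW [hnz hiso hsum hdim]; split.
- by move=> V; rewrite in_cons => /orP [/eqP -> | /hnz].
- by move=> V; rewrite in_cons => /orP [/eqP -> | /hiso].
- by rewrite big_cons hsum addvC -[RHS](addv_diff_cap W U) (capv_idPr hUW).
- by rewrite big_cons -hdim -(dimv_cap_compl W U) (capv_idPr hUW).
Qed.

Lemma iso_decomp_of_parts s : iso_parts fullv s -> iso_decomp A (size s).
Proof.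
move=> [hnz hiso hsum hdim].
rewrite (big_nth 0%VS) big_mkord in hsum; rewrite (big_nth 0%VS) big_mkord in hdim.
exists (fun i : 'I_(size s) => nth 0%VS s i); split.
- by move=> i; apply: hnz; apply: mem_nth.
- by move=> i; apply: hiso; apply: mem_nth.
- by rewrite directvE /= hsum hdim.
- exact: hsum.
Qed.

Variable d : nat.
Hypothesis altA : alt_space A.
Hypothesis degA : forall v, (deg_of A v <= d)%N.

(* A maximal isotropic U in W satisfies dim W <= (d + 1) dim U, since W is
   covered by U and the annihilator of A U, which has dimension <= d dim U. *)
Lemma maximal_isotropic_dim (W U : {vspace 'cV[F]_n}) :
  (W :&: Aperp A U <= U)%VS -> (\dim W <= \dim U * d.+1)%N.
Proof.
move=> hmax; apply: leq_trans (dim_cap_annihilator _ _) _.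
by rewrite mulnS; apply: leq_add (dimvS hmax) (dim_Aspan U degA).
Qed.

(* Greedy peeling: repeatedly split off a maximal isotropic subspace. Each
   step removes a (d+1)-th of the dimension at least, so the number of parts
   is at most 1 + (d + 1) ln (dim W). *)
Lemma peel_decomposition (W : {vspace 'cV[F]_n}) : exists s, iso_parts W s /\
  ((0 < \dim W)%N -> Rle (INR (size s)) (peel_bound d.+1 (\dim W))).
Proof.
have [m lem] := ubnP (\dim W); elim: m W lem => // m IH W hWm.
have [hW0 | hWpos] := posnP (\dim W).
  exists [::]; split; last by rewrite hW0.
  by split; rewrite ?big_nil ?hW0 //; apply/esym/eqP; rewrite -dimv_eq0 hW0.
have [U [hUW hU hmax]] := maximal_isotropic altA (sub0v W) (@isotropic0 F n A).
have hWU := maximal_isotropic_dim hmax.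
have hdimW : \dim W = (\dim U + \dim (W :\: U))%N.
  by rewrite -(dimv_cap_compl W U) (capv_idPr hUW) addnC.
have hU0 : (0 < \dim U)%N by nia.
have [s [hs hsize]] := IH (W :\: U)%VS ltac:(lia).
exists (U :: s); split; first by apply: iso_parts_cons; rewrite // -dimv_eq0 -lt0n.
move=> _; rewrite [size _]/= S_INR hdimW.
have [hW'0 | hW'pos] := posnP (\dim (W :\: U)).
  rewrite (iso_parts_dim0 hs hW'0) /=.
  have := peel_bound_ge1 d.+1 (ltn_addr (\dim (W :\: U)) hU0); lra.
have := @peel_bound_step d.+1 _ (\dim U) hW'pos ltac:(lia).
have := hsize hW'pos; lra.
Qed.

End Peeling.

(* A nonzero alternating space moves some basis vector e_j, so Delta >= 1. *)
Lemma Delta_pos (F : fieldType) (n : nat) (A : {vspace 'M[F]_n}) (d : nat) :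
  A != 0%VS -> (forall v, (deg_of A v <= d)%N) -> (1 <= d)%N.
Proof.
move=> hA0 degA; rewrite lt0n; apply/negP => /eqP d0.
move: hA0; rewrite -vpick0 => /negP; apply; apply/eqP/matrixP => i j.
have /eqP : deg_of A (delta_mx j 0) = 0%N by apply/eqP; rewrite -leqn0; have := degA (delta_mx j 0); rewrite d0.
rewrite dimv_eq0 => /eqP himg.
have := mem_Aimage (delta_mx j 0) (memv_pick A).
rewrite [Aimage _ _]himg memv0 -colE => /eqP /(congr1 (fun c : 'cV[F]_n => c i 0)).
by rewrite !mxE.
Qed.

Theorem proposition1p13 :
  exists C : R, Rlt (INR 0) C /\
    forall (F : fieldType) (n : nat), (2 <= n)%N ->
    forall A : {vspace 'M[F]_n}, alt_space A -> A != 0%VS ->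
    forall k d : nat, is_chi A k -> is_Delta A d ->
      Rle (INR k) (Rmult (Rmult C (INR d)) (log2R n)).
Proof.
exists (IZR 3); split; first by simpl; lra.
move=> F n hn A altA hA0 k d [_ chi_min] [_ degA].
have [s [hs hsize]] := peel_decomposition altA degA fullv.
have hdimf : \dim (fullv : {vspace 'cV[F]_n}) = n by rewrite dimvf dim_matrix mulr1.
rewrite hdimf in hsize.
have /leP /le_INR hks := chi_min _ (iso_decomp_of_parts hs).
have := peel_bound_log2 (Delta_pos hA0 degA) hn.
have := hsize (ltnW hn); lra.
Qed.
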